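(* Assume the lifted model described in the context is well-posed and topologically detectable, and let $\mathcal{G}_T$ be its topology. Let $i\neq j$ be vertices with $i\in N_{\mathcal{G}_T}(j,2)$ and $i\notin N_{\mathcal{G}_T}(j)$ (i.e. $i$ and $j$ are strict two-hop neighbors). Then the $T\times T$ matrix $\mathbf{B}_j'\,\Phi_X^{-1}(\omega)\,\mathbf{B}_i$ is Hermitian positive semidefinite, $\mathbf{B}_j'\Phi_X^{-1}(\omega)\mathbf{B}_i\succeq0$, for all $\omega\in[0,2\pi)$ (at which it is defined).
   Context: Model: real $b_{ij}\ge0$ for $i\ne j$, $b_{ii}=0$; for each $i$ a stable scalar filter $g_i$ with $z$-transform $1/\mathsf{S}_i(z)$, $\mathsf{S}_i(z)=\sum_{n=1}^{l}a_{n,i}\big(\frac{2(1-z^{-1})}{\Delta t(1+z^{-1})}\big)^n+\sum_{j\ne i}b_{ij}$; $h_{ij}=b_{ij}g_i$. For a scalar filter $f$ its $T$-lifting is the $T\times T$ matrix filter with $(p,t)$ entry $a\mapsto f(aT+p-t)$, $p,t\in\{0,\dots,T-1\}$. Let $H_{ij}$ be the $T$-lifting of $h_{ij}$ (so $H_{ij}=b_{ij}G_i$ with $G_i$ the lifting of $g_i$, and $H_{ii}=\mathbf{0}$), with frequency response $\mathsf{H}_{ij}(\omega)=\sum_a H_{ij}[a]e^{-\mathrm{i}\omega a}$. The lifted processes $X_i$, $E_i$ ($T$-vector valued) satisfy $X_i(k)=\sum_j (H_{ij}*X_j)(k)+E_i(k)$; $E_1,\dots,E_m$ are jointly wide-sense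 stationary, zero-mean and mutually uncorrelated, with power spectral density matrices $\Phi_{E_i}(\omega)$. Stack $X=[X_1',\dots,X_m']'$, $E=[E_1',\dots,E_m']'$ and let $\mathbb{H}(\omega)$ be the $mT\times mT$ block matrix with $(i,j)$ block $\mathsf{H}_{ij}(\omega)$, so $X=\mathbb{H}*X+E$. Well-posed: $\mathbb{I}-\mathbb{H}(\omega)$ is invertible for almost every $\omega$ (so $X=(\mathbb{I}-\mathbb{H})^{-1}E$ and $\Phi_X(\omega)$ denotes the power spectral density of $X$). Topologically detectable: $\Phi_{E_j}(\omega)\succ0$ for every $\omega$ and every $j$. $\mathbf{B}_j\in\mathbb{R}^{mT\times T}$ is the block column matrix whose $j$-th $T\times T$ block is $I_T$ and whose other blocks are zero. Graphs: the LDG $\mathcal{G}$ has vertices $1,\dots,m$ and a directed edge $i\to j$ iff $b_{ji}\ne0$; the children of $j$ are $\mathcal{C}_{\mathcal{G}}(j)=\{k: b_{kj}\neq0\}$. The topology $\mathcal{G}_T$ is the undirected graph with an edge $\{i,j\}$ iff $b_{ij}\neq0$ or $b_{ji}\neq0$; $N_{\mathcal{G}_T}(j)$ is the set of neighbors of $j$ in $\mathcal{G}_T$, and $N_{\mathcal{G}_T}(j,2)=\{i: \text{there is } k \text{ with } \{j,k\},\{i,k\}\text{ edges of }\mathcal{G}_T\}$. *)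

(* Frequency-domain (fixed-frequency) rendering of the lifted
   network model. *)
From HB Require Import structures.
From mathcomp Require Import all_boot all_order all_algebra.
Set Implicit Arguments. Unset Strict Implicit. Unset Printing Implicit Defensive.
Import Order.TTheory GRing.Theory Num.Theory.
Local Open Scope ring_scope.

Section Model.
Variable C : numClosedFieldType.

Definition ctrmx (p q : nat) (A : 'M[C]_(p, q)) : 'M[C]_(q, p) :=
  map_mx Num.conj (trmx A).

Definition hermitianmx (n : nat) (A : 'M[C]_n) : Prop := ctrmx A = A.

Definition psdmx (n : nat) (A : 'M[C]_n) : Prop :=
  hermitianmx A /\ forall v : 'cV[C]_n, 0 <= (ctrmx v *m A *m v) 0 0.

Definition pdmx (n : nat) (A : 'M[C]_n) : Prop :=
  hermitianmx A /\ forall v : 'cV[C]_n, v != 0 -> 0 < (ctrmx v *m A *m v) 0 0.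

Variables (m T : nat).

(* the stacked dimension m*T, as a sum of m blocks of size T *)
Notation mT := (\sum_(k < m) (fun _ : 'I_m => T) k)%N.

Definition bigH (b : 'I_m -> 'I_m -> C) (G : 'I_m -> 'M[C]_T) : 'M[C]_mT :=
  @mxblock C m m (fun _ => T) (fun _ => T) (fun i j => b i j *: G i).

(* block diagonal PSD of E = [E_1', ..., E_m']' (mutually uncorrelated) *)
Definition PhiE (PE : 'I_m -> 'M[C]_T) : 'M[C]_mT :=
  @mxdiag C m (fun _ => T) PE.

(* PSD of X = (I - H)^{-1} E :  (I-H)^{-1} Phi_E (I-H)^{-*} *)
Definition PhiX (b : 'I_m -> 'I_m -> C) (G : 'I_m -> 'M[C]_T)
  (PE : 'I_m -> 'M[C]_T) : 'M[C]_mT :=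
  invmx (1%:M - bigH b G) *m PhiE PE *m ctrmx (invmx (1%:M - bigH b G)).

Definition Bsel (j : 'I_m) : 'M[C]_(mT, T) :=
  @mxcol C m (fun _ => T) T (fun k => if k == j then 1%:M else 0).

Definition topo_edge (b : 'I_m -> 'I_m -> C) (i j : 'I_m) : bool :=
  (b i j != 0) || (b j i != 0).

Definition nbr (b : 'I_m -> 'I_m -> C) (j i : 'I_m) : Prop := topo_edge b j i.

Definition nbr2 (b : 'I_m -> 'I_m -> C) (j i : 'I_m) : Prop :=
  exists k : 'I_m, topo_edge b j k /\ topo_edge b i k.

End Model.
Arguments Bsel {C m} T j.

From Pilot Require Import Defs.
From HB Require Import structures.
From mathcomp Require Import all_boot all_order all_algebra.
Import Order.TTheory GRing.Theory Num.Theory.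
Local Open Scope ring_scope.
Set Implicit Arguments. Unset Strict Implicit. Unset Printing Implicit Defensive.

(* Phi_X = (I - H)^-1 Phi_E (I - H)^-*, so Phi_X^-1 = (I - H)^* Phi_E^-1 (I - H),
   and since Phi_E is block diagonal,
     B_j' Phi_X^-1 B_i = \sum_k c_kj^* Phi_E_k^-1 c_ki,   c_ki = delta_ki I - b_ki G_k.
   Without a direct edge between i and j we have b_ij = b_ji = 0, so the terms k = i
   and k = j vanish, and every other term equals b_kj b_ki G_k^* Phi_E_k^-1 G_k:
   a nonnegative multiple of a congruence of a positive definite matrix. *)

Section ConjugateTranspose.
Variable C : numClosedFieldType.

Lemma ctrmx_mul (p q r : nat) (A : 'M[C]_(p, q)) (B : 'M[C]_(q, r)) :
  ctrmx (A *m B) = ctrmx B *m ctrmx A.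
Proof. by rewrite /ctrmx trmx_mul map_mxM. Qed.

Lemma ctrmxK (p q : nat) : cancel (@ctrmx C p q) (@ctrmx C q p).
Proof. by move=> A; apply/matrixP => x y; rewrite !mxE conjCK. Qed.

Lemma ctrmx1 (n : nat) : ctrmx (1%:M : 'M[C]_n) = 1%:M.
Proof. by rewrite /ctrmx trmx1 map_mx1. Qed.

Lemma ctrmx0 (p q : nat) : ctrmx (0 : 'M[C]_(p, q)) = 0.
Proof. by apply/matrixP => x y; rewrite !mxE rmorph0. Qed.

Lemma ctrmxD (p q : nat) (A B : 'M[C]_(p, q)) : ctrmx (A + B) = ctrmx A + ctrmx B.
Proof. by apply/matrixP => x y; rewrite !mxE rmorphD. Qed.

Lemma ctrmxN (p q : nat) (A : 'M[C]_(p, q)) : ctrmx (- A) = - ctrmx A.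
Proof. by apply/matrixP => x y; rewrite !mxE rmorphN. Qed.

Lemma ctrmxZ (p q : nat) (c : C) (A : 'M[C]_(p, q)) : ctrmx (c *: A) = c^* *: ctrmx A.
Proof. by apply/matrixP => x y; rewrite !mxE rmorphM. Qed.

Lemma ctrmx_invmx (n : nat) (A : 'M[C]_n) : ctrmx (invmx A) = invmx (ctrmx A).
Proof. by rewrite /ctrmx trmx_inv map_invmx. Qed.

Lemma ctrmx_mxcol (p n : nat) (p_ : 'I_p -> nat) (B_ : forall k, 'M[C]_(p_ k, n)) :
  ctrmx (\mxcol_k B_ k) = \mxrow_k ctrmx (B_ k).
Proof. by apply/matrixP => x y; rewrite !mxE. Qed.

Lemma ctrmx_mxcol_mxdiag_mxcol (p n r : nat) (p_ : 'I_p -> nat)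
    (B_ : forall k, 'M[C]_(p_ k, n)) (D_ : forall k, 'M[C]_(p_ k))
    (B'_ : forall k, 'M[C]_(p_ k, r)) :
  ctrmx (\mxcol_k B_ k) *m \mxdiag_k D_ k *m \mxcol_k B'_ k
    = \sum_k ctrmx (B_ k) *m D_ k *m B'_ k.
Proof. by rewrite ctrmx_mxcol mul_mxrow_mxdiag mul_mxrow_mxcol. Qed.

End ConjugateTranspose.

Lemma mul_mxdiag (R : pzSemiRingType) (p : nat) (p_ : 'I_p -> nat)
    (D_ D'_ : forall k, 'M[R]_(p_ k)) :
  \mxdiag_k D_ k *m \mxdiag_k D'_ k = \mxdiag_k (D_ k *m D'_ k).
Proof.
rewrite {1}/mxdiag mul_mxblock_mxdiag; apply: eq_mxblock => k l.
by case: eqVneq => [<-|_]; rewrite ?conform_mx_id ?mul0mx.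
Qed.

Lemma invmx_right (R : comUnitRingType) (n : nat) (A B : 'M[R]_n) :
  A *m B = 1%:M -> invmx A = B.
Proof.
by move=> AB1; have [uA _] := mulmx1_unit AB1; rewrite -[LHS]mulmx1 -AB1 mulKmx.
Qed.

Lemma mulmx_mxdiag_invmx (R : comUnitRingType) (p : nat) (p_ : 'I_p -> nat)
    (D_ : forall k, 'M[R]_(p_ k)) :
  (forall k, D_ k \in unitmx) -> \mxdiag_k D_ k *m \mxdiag_k invmx (D_ k) = 1%:M.
Proof.
by move=> uD; rewrite mul_mxdiag -(mxdiagZ 1); apply: eq_mxdiag => k; rewrite mulmxV.
Qed.

Section PositiveSemidefinite.
Variable C : numClosedFieldType.

Lemma psdmx0 (n : nat) : psdmx (0 : 'M[C]_n).
Proof. by split=> [|v]; [apply: ctrmx0 | rewrite mulmx0 mul0mx mxE]. Qed.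

Lemma psdmxD (n : nat) (A B : 'M[C]_n) : psdmx A -> psdmx B -> psdmx (A + B).
Proof.
move=> [hA qA] [hB qB]; split; first by rewrite /Defs.hermitianmx ctrmxD hA hB.
by move=> v; rewrite mulmxDr mulmxDl mxE addr_ge0.
Qed.

Lemma psdmxZ (n : nat) (c : C) (A : 'M[C]_n) : 0 <= c -> psdmx A -> psdmx (c *: A).
Proof.
move=> c0 [hA qA]; split; first by rewrite /Defs.hermitianmx ctrmxZ hA geC0_conj.
by move=> v; rewrite -scalemxAr -scalemxAl mxE mulr_ge0.
Qed.

Lemma psdmx_sum (I : finType) (n : nat) (c : I -> C) (A : I -> 'M[C]_n) :
  (forall k, 0 <= c k) -> (forall k, psdmx (A k)) -> psdmx (\sum_k c k *: A k).
Proof.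
move=> c0 psdA; apply: (big_ind (@psdmx C n)); [exact: psdmx0 | exact: psdmxD |].
by move=> k _; apply: psdmxZ.
Qed.

Lemma psdmx_congr (n r : nat) (A : 'M[C]_n) (B : 'M[C]_(n, r)) :
  psdmx A -> psdmx (ctrmx B *m A *m B).
Proof.
move=> [hA qA]; split; first by rewrite /Defs.hermitianmx !ctrmx_mul ctrmxK hA mulmxA.
by move=> v; have := qA (B *m v); rewrite ctrmx_mul !mulmxA.
Qed.

Lemma pdmx_unit (n : nat) (A : 'M[C]_n) : pdmx A -> A \in unitmx.
Proof.
move=> [_ qA]; rewrite unitmxE unitfE; apply/negP => /det0P [v v0 vA].
have cv0 : ctrmx v != 0 by apply: contra v0 => /eqP cv0; rewrite -(ctrmxK v) cv0 ctrmx0.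
by have := qA _ cv0; rewrite ctrmxK vA mul0mx mxE ltxx.
Qed.

Lemma pdmx_invmx_psd (n : nat) (A : 'M[C]_n) : pdmx A -> psdmx (invmx A).
Proof.
move=> pdA; have uA := pdmx_unit pdA; case: pdA => hA qA.
have hAV : ctrmx (invmx A) = invmx A by rewrite ctrmx_invmx hA.
split=> // v; set w := invmx A *m v.
have -> : ctrmx v *m invmx A *m v = ctrmx w *m A *m w.
  by rewrite /w ctrmx_mul hAV -!mulmxA (mulmxA A) mulmxV // mul1mx.
have [->|w0] := eqVneq w 0; first by rewrite mulmx0 mxE.
exact/ltW/qA.
Qed.

End PositiveSemidefinite.

Section Network.
Variables (C : numClosedFieldType) (m T : nat).
Variables (b : 'I_m -> 'I_m -> C) (G : 'I_m -> 'M[C]_T).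

Local Notation IsubH := (1%:M - bigH b G).

Definition IsubH_block (i k : 'I_m) : 'M[C]_T :=
  (if k == i then 1%:M else 0) - b k i *: G k.

Lemma ctrmx_Bsel (j : 'I_m) : ctrmx (@Bsel C m T j) = (Bsel T j)^T.
Proof.
apply/matrixP => x y; rewrite !mxE; case: ifP => _; rewrite !mxE ?rmorph_nat //.
exact: rmorph0.
Qed.

Lemma IsubH_Bsel (i : 'I_m) : IsubH *m Bsel T i = \mxcol_k IsubH_block i k.
Proof.
rewrite mulmxBl mul1mx /bigH /Bsel mul_mxblock_mxrow -mxcolB; apply: eq_mxcol => k.
under eq_bigr => l _ do rewrite (fun_if (mulmx _)) mulmx1 mulmx0.
by rewrite -big_mkcond big_pred1_eq.
Qed.

Lemma invmx_PhiX (PE : 'I_m -> 'M[C]_T) :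
  IsubH \in unitmx -> (forall k, PE k \in unitmx) ->
  invmx (PhiX b G PE) = ctrmx IsubH *m PhiE (fun k => invmx (PE k)) *m IsubH.
Proof.
move=> uIH uPE; apply: invmx_right.
rewrite /PhiX !mulmxA -(mulmxA _ (ctrmx (invmx IsubH))) -ctrmx_mul mulmxV //.
rewrite ctrmx1 mulmx1 -(mulmxA _ (PhiE PE)) mulmx_mxdiag_invmx // mulmx1.
exact: mulVmx.
Qed.

Lemma Bsel_invmx_PhiX_Bsel (PE : 'I_m -> 'M[C]_T) (i j : 'I_m) :
  IsubH \in unitmx -> (forall k, PE k \in unitmx) ->
  (Bsel T j)^T *m invmx (PhiX b G PE) *m Bsel T i
    = \sum_k ctrmx (IsubH_block j k) *m invmx (PE k) *m IsubH_block i k.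
Proof.
move=> uIH uPE; rewrite invmx_PhiX // -ctrmx_Bsel !mulmxA -ctrmx_mul.
by rewrite -!mulmxA mulmxA !IsubH_Bsel ctrmx_mxcol_mxdiag_mxcol.
Qed.

Lemma IsubH_block_nonadjacent (i j k : 'I_m) (P : 'M[C]_T) :
  i != j -> b i j = 0 -> b j i = 0 -> b i i = 0 -> b j j = 0 ->
  ctrmx (IsubH_block j k) *m P *m IsubH_block i k
    = ((b k j)^* * b k i) *: (ctrmx (G k) *m P *m G k).
Proof.
move=> ij bij bji bii bjj; rewrite /IsubH_block.
have [->|kj] := eqVneq k j.
  by rewrite eq_sym (negbTE ij) bji bjj !scale0r !subr0 mulmx0 mulr0 scale0r.
have [->|ki] := eqVneq k i.
  by rewrite bij bii !scale0r !subr0 ctrmx0 !mul0mx rmorph0 mul0r scale0r.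
rewrite !sub0r ctrmxN ctrmxZ !mulNmx mulmxN opprK.
by rewrite -!scalemxAl -!scalemxAr scalerA.
Qed.

End Network.

Theorem theorem3p1 (C : numClosedFieldType) (m T : nat)
  (b : 'I_m -> 'I_m -> C)            (* coupling coefficients b_ij *)
  (G : 'I_m -> 'M[C]_T)               (* G_i(omega): response of lifted g_i *)
  (PE : 'I_m -> 'M[C]_T)              (* Phi_{E_i}(omega) *)
  (hb_nonneg : forall i j, i != j -> 0 <= b i j)
  (hb_diag : forall i, b i i = 0)
  (hwell : (1%:M - bigH b G) \in unitmx)          (* well-posed at omega *)
  (hdetect : forall k, pdmx (PE k))               (* topologically detectable *)
  (i j : 'I_m) (hij : i != j)
  (h2 : nbr2 b j i) (h1 : ~ nbr b j i) :
  psdmx (trmx (Bsel T j) *m invmx (PhiX b G PE) *m Bsel T i).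
Proof.
have b_ge0 k l : 0 <= b k l.
  by have [->|kl] := eqVneq k l; [rewrite hb_diag | exact: hb_nonneg].
have [bji bij] : b j i = 0 /\ b i j = 0.
  by move/negP: h1; rewrite /nbr /topo_edge negb_or !negbK => /andP[/eqP-> /eqP->].
rewrite Bsel_invmx_PhiX_Bsel // => [|k]; last exact: pdmx_unit.
under eq_bigr => k _ do rewrite IsubH_block_nonadjacent // geC0_conj //.
apply: psdmx_sum => k; first exact: mulr_ge0.
exact/psdmx_congr/pdmx_invmx_psd.
Qed.
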